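(* Let $\mathcal{T}$ be a tower with $\mathbb{K}_0=\emptyset$ whose maps are elementary inclusions or elementary contractions (named by the naming convention below), let $\hat{\mathbb{K}}_0,\dots,\hat{\mathbb{K}}_m$ be its active small coning construction and $\mathcal{W}$ its contracting forest. Let $x$ be an internal node of $\mathcal{W}$ with children $y_1,y_2$. Then $c(x)\le 2\cdot|E(y_1)\setminus E(y_2)|$.
   Context: Elementary inclusion: $\mathbb{K}_{i+1}=\mathbb{K}_i\cup\{\sigma\}$, $\sigma\notin\mathbb{K}_i$. Elementary contraction of distinct vertices $u,v$: for one of them, say $v$, the vertex set of $\mathbb{K}_{i+1}$ is that of $\mathbb{K}_i$ minus $v$, $\phi_i(u)=\phi_i(v)=u$, identity elsewhere, $\mathbb{K}_{i+1}=\phi_i(\mathbb{K}_i)$. Active small coning construction: $\hat{\mathbb{K}}_0=\emptyset$; vertices flagged active/inactive, simplex active iff all its vertices are; $\mathrm{Act}\overline{\mathrm{St}}(w,\hat{\mathbb{K}}_i)$ = active simplices of $\hat{\mathbb{K}}_i$ in the closed star of $w$. Inclusion of $\sigma$: add $\sigma$ (new vertex active). Contraction of $u,v$: if $|\mathrm{Act}\overline{\mathrm{St}}(u,\hat{\mathbb{K}}_i)|\le|\mathrm{Act}\overline{\mathrm{St}}(v,\hat{\mathbb{K}}_i)|$, $\hat{\mathbb{K}}_{i+1}=\hat{\mathbb{K}}_i\cup\{\{v\}\cup\tau:\tau\in\mathrm{Act}\overline{\mathrm{St}}(u,\hat{\mathbb{K}}_i)\}$ and $u$ is marked inactive; otherwise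 symmetric. Naming convention: each contraction maps $u,v$ to the vertex not marked inactive. Contracting forest: $\mathcal{W}_0=\emptyset$; inclusion of a simplex of positive dimension leaves the forest unchanged; inclusion of a vertex $w$ adds a single-node tree labeled $w$; a contraction of $u,v$ makes the roots labeled $u$ and $v$ the two children of a new root labeled with the image vertex; $\mathcal{W}=\mathcal{W}_m$. Each internal node $x$ corresponds to one contraction $\phi_i$, and its cost is $c(x)=|\hat{\mathbb{K}}_{i+1}\setminus\hat{\mathbb{K}}_i|$; leaves have cost $0$. Let $\Sigma$ be the collection of simplices added at elementary inclusions; for $\sigma\in\Sigma$ added by $\phi_i$, each vertex of $\sigma$ labels a root of $\mathcal{W}_{i+1}$, i.e., corresponds to a node of $\mathcal{W}$; $E(x)$ is the set of $\sigma\in\Sigma$ with at least one vertex whose node lies in the subtree rooted at $x$. *)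

From mathcomp Require Import all_boot.
From mathcomp Require Import finmap.

Set Implicit Arguments.
Unset Strict Implicit.
Unset Printing Implicit Defensive.

Local Open Scope fset_scope.

Notation simplex := {fset nat}.
Notation complex := {fset {fset nat}}.

(* A tower starting at K_0 = empty is given by the list of its elementary
   maps phi_0, ..., phi_{m-1}.  [Incl s] is the elementary inclusion of the
   simplex s; [Contr a b] is the elementary contraction of the vertices a, b
   (which of the two disappears is fixed by the naming convention, i.e. by
   the active small coning construction below). *)
Inductive step := Incl of simplex | Contr of nat & nat.

Definition is_vertex (w : nat) (L : complex) : bool :=
  [exists s : L, w \in val s].

Definition closed_star (w : nat) (L : complex) : complex :=
  [fset t in L | [exists r : L, (w \in val r) && (t `<=` val r)]].

Definition act_star (w : nat) (L : complex) (act : {fset nat}) : complex :=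
  [fset t in closed_star w L | t `<=` act].

(* state of the construction after i steps: K_i, Khat_i, active vertices *)
Record cstate := CState { cK : complex; cKh : complex; cAct : {fset nat} }.

Definition init_state : cstate := CState fset0 fset0 fset0.

(* For a contraction of a, b: returns (u, v) where u is the vertex marked
   inactive (and removed from the tower), v the surviving vertex. *)
Definition ord_pair (st : cstate) (a b : nat) : nat * nat :=
  if #|` act_star a (cKh st) (cAct st)| <= #|` act_star b (cKh st) (cAct st)|
  then (a, b) else (b, a).

Definition contr_map (u v w : nat) : nat := if w == u then v else w.

Definition next_state (st : cstate) (s : step) : cstate :=
  match s with
  | Incl sg =>
      CState (sg |` cK st) (sg |` cKh st)
             (if #|` sg| == 1 then cAct st `|` sg else cAct st)
  | Contr a b =>
      let uv := ord_pair st a b in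
      let u := uv.1 in let v := uv.2 in
      CState [fset [fset contr_map u v w | w in (t : simplex)] | t in cK st]
             (cKh st `|` [fset (v |` (t : simplex)) | t in act_star u (cKh st) (cAct st)])
             (cAct st `\ u)
  end.

Definition state (T : seq step) (i : nat) : cstate :=
  foldl next_state init_state (take i T).

Definition Kc (T : seq step) (i : nat) : complex := cK (state T i).
Definition Khat (T : seq step) (i : nat) : complex := cKh (state T i).

Definition stepn (T : seq step) (i : nat) : step := nth (Incl fset0) T i.

(* Validity of the tower: elementary inclusions add a new nonempty simplex
   all of whose nonempty proper faces are present (so every K_i is a
   simplicial complex), new vertices are fresh; elementary contractions
   contract two distinct vertices of K_i. *)
Definition valid_tower (T : seq step) : Prop :=
  forall i, i < size T ->
  match stepn T i with
  | Incl sg =>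
      [/\ sg != fset0, sg \notin Kc T i,
          (forall t : simplex, t `<` sg -> t != fset0 -> t \in Kc T i) &
          (forall w, #|` sg| = 1 -> w \in sg ->
             forall j, j <= i -> ~~ is_vertex w (Kc T j))]
  | Contr a b => [/\ a != b, is_vertex a (Kc T i) & is_vertex b (Kc T i)]
  end.

(* ---- contracting forest ----
   Nodes of W are the indices j of the steps that are vertex inclusions
   (leaves) or contractions (internal nodes). Step j produces a root whose
   label is the included vertex, resp. the image vertex of the contraction. *)
Definition produces (T : seq step) (j w : nat) : bool :=
  match stepn T j with
  | Incl sg => sg == [fset w]
  | Contr a b => (ord_pair (state T j) a b).2 == w
  end.

(* the root of W_i labeled w (the latest node created before step i with
   label w) *)
Definition node_of (T : seq step) (w i : nat) : option nat :=
  last None [seq Some j | j <- iota 0 i & produces T j w].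

Definition children (T : seq step) (x : nat) : seq nat :=
  match stepn T x with
  | Contr a b => pmap id [:: node_of T a x; node_of T b x]
  | Incl _ => [::]
  end.

Definition is_internal (T : seq step) (x : nat) : bool :=
  (x < size T) && (if stepn T x is Contr _ _ then true else false).

(* z lies in the subtree rooted at x (fuel-bounded; children have smaller
   indices, so fuel x.+1 suffices) *)
Fixpoint in_sub (T : seq step) (f z x : nat) : bool :=
  (z == x) ||
  (if f is f'.+1 then has (fun y => in_sub T f' z y) (children T x) else false).

Definition in_subtree (T : seq step) (z x : nat) : bool := in_sub T x.+1 z x.

Definition E (T : seq step) (y : nat) : complex :=
  [fset sg | sg in
     pmap (fun i => match stepn T i with
                    | Incl sg =>
                        if [exists w : sg,
                              if node_of T (val w) i.+1 is Some n
                              then in_subtree T n y else false]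
                        then Some sg else None
                    | Contr _ _ => None
                    end) (iota 0 (size T))].

Definition cost (T : seq step) (x : nat) : nat :=
  #|` Khat T x.+1 `\` Khat T x|.

From mathcomp Require Import all_boot.
From mathcomp Require Import finmap.

(* Contracting u into v, with |Act St(u)| <= |Act St(v)|, adds the cones v * tau for tau in
   Act St(u) \ Act St(v), so the cost is at most the number of simplices of the active star of
   either endpoint that avoid the other one.  Along the construction K_i is exactly the active part
   of Khat_i and Khat_i is closed under faces; hence every such tau in the star of p avoiding q
   yields a simplex of K_x containing p but not q, namely tau or p * tau, which gives the factor 2.
   Finally every simplex of K_x is the image of a unique included simplex sigma.  A vertex of sigma
   mapped to p puts sigma in E(y_p), while sigma in E(y_q) would put q in the image, since the
   labels of all nodes in the subtree of y_q are mapped to q. *)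

Set Implicit Arguments.
Unset Strict Implicit.
Unset Printing Implicit Defensive.

Local Open Scope fset_scope.

Lemma is_vertexP w (L : complex) :
  reflect (exists2 s, s \in L & w \in s) (is_vertex w L).
Proof.
apply: (iffP existsP) => [[s Hw]|[s Hs Hw]]; first by exists (val s) => //; apply: fsvalP.
by exists [` Hs].
Qed.

Lemma act_starP w (L : complex) (A : {fset nat}) t :
  reflect [/\ t \in L, t `<=` A & exists2 r, r \in L & (w \in r) && (t `<=` r)]
          (t \in act_star w L A).
Proof.
rewrite !inE; apply: (iffP idP).
  case/andP => /andP [Ht /existsP [r Hr]] HA; split => //.
  by exists (val r) => //; apply: fsvalP.
by case=> Ht HA [r Hr Hwr]; rewrite Ht HA andbT; apply/existsP; exists [` Hr].
Qed.

Lemma fproper_fset1 (w : nat) (s : simplex) :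
  w \in s -> #|` s| != 1 -> [fset w] `<` s.
Proof.
move=> Hw Hs; rewrite fproperEneq fsub1set Hw andbT.
by apply: contraNneq Hs => <-; rewrite cardfs1.
Qed.

Lemma fset1U_neq0 (v : nat) (t : simplex) : v |` t != fset0.
Proof. by apply/fset0Pn; exists v; rewrite fset1U1. Qed.

Lemma fset1_neq0 (w : nat) : [fset w] != fset0.
Proof. by rewrite -cardfs_eq0 cardfs1. Qed.

Lemma contr_map_neq u v w : u != v -> contr_map u v w != u.
Proof. by move=> Huv; rewrite /contr_map; case: ifP => [_|/negbT //]; rewrite eq_sym. Qed.

Lemma contr_map_id u v w : w != u -> contr_map u v w = w.
Proof. by rewrite /contr_map => /negbTE ->. Qed.

Lemma contr_map_U u v w : (w == u) || (w == v) -> contr_map u v w = v.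
Proof. by rewrite /contr_map; case: ifP => //= _ /eqP. Qed.

Lemma imfset_contr_map_id u v (t : simplex) :
  u \notin t -> [fset contr_map u v w | w in t] = t.
Proof.
move=> Hu; rewrite -[RHS]imfset_id; apply: eq_in_imfset => w Hw /=.
by apply: contr_map_id; apply: contraNneq Hu => <-.
Qed.

Lemma imfset_contr_map_U1 u v (t : simplex) :
  u \notin t -> [fset contr_map u v w | w in u |` t] = v |` t.
Proof. by move=> Hu; rewrite imfsetU1 imfset_contr_map_id // /contr_map eqxx. Qed.

Lemma ord_pairE st a b : ord_pair st a b = (a, b) \/ ord_pair st a b = (b, a).
Proof. by rewrite /ord_pair; case: ifP; [left|right]. Qed.

Lemma card_act_star_ord_pair st a b :
  let uv := ord_pair st a b in
  #|` act_star uv.1 (cKh st) (cAct st)| <= #|` act_star uv.2 (cKh st) (cAct st)|.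
Proof. by rewrite /ord_pair; case: ifP => //= /negbT; rewrite -ltnNge => /ltnW. Qed.

Definition face_closed (L : complex) : Prop :=
  forall t t' : simplex, t \in L -> t' `<=` t -> t' != fset0 -> t' \in L.

Definition active_part (K Kh : complex) (A : {fset nat}) : Prop :=
  forall t, (t \in K) = (t \in Kh) && (t `<=` A).

Record coning_inv (st : cstate) : Prop := ConingInv {
  cK_active : active_part (cK st) (cKh st) (cAct st);
  cKh_closed : face_closed (cKh st) }.

Definition star_avoiding (L : complex) (A : {fset nat}) (p q : nat) : complex :=
  [fset t in act_star p L A | q \notin t].

Definition simplices_avoiding (K : complex) (p q : nat) : complex :=
  [fset s in K | (p \in s) && (q \notin s)].

Lemma mem_simplices_avoiding K p q s :
  (s \in simplices_avoiding K p q) = [&& s \in K, p \in s & q \notin s].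
Proof. by rewrite in_fset. Qed.

Lemma mem_star_avoiding L A p q t :
  (t \in star_avoiding L A p q) = (t \in act_star p L A) && (q \notin t).
Proof. by rewrite in_fset. Qed.

Lemma act_star_diff_sub (L : complex) (A : {fset nat}) p q :
  act_star p L A `\` act_star q L A `<=` star_avoiding L A p q.
Proof.
apply/fsubsetP => t; rewrite in_fsetD => /andP [Hq Hp]; rewrite mem_star_avoiding Hp /=.
apply: contra Hq => Hqt; have /act_starP [Ht HtA _] := Hp.
by apply/act_starP; split => //; exists t; rewrite ?Hqt ?fsubset_refl.
Qed.

Section ActivePart.

Variables (K Kh : complex) (A : {fset nat}).
Hypotheses (HK : active_part K Kh A) (Hcl : face_closed Kh).

Lemma vertex_active w : is_vertex w K -> w \in A.
Proof.
by case/is_vertexP => s; rewrite HK => /andP [_ /fsubsetP HsA] /HsA.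
Qed.

Lemma vertex_fset1 w : is_vertex w K -> [fset w] \in Kh.
Proof.
case/is_vertexP => s; rewrite HK => /andP [Hs _] Hw.
by apply: (Hcl Hs); rewrite ?fsub1set ?fset1_neq0.
Qed.

Lemma card_star_avoiding p q : p \in A -> p != q ->
  #|` star_avoiding Kh A p q| <= 2 * #|` simplices_avoiding K p q|.
Proof.
move=> HpA Hpq; set S := simplices_avoiding K p q.
have Hsplit : star_avoiding Kh A p q `<=` S `|` [fset s `\ p | s in S].
  apply/fsubsetP => t; rewrite mem_star_avoiding.
  case/andP => /act_starP [Ht HtA [r Hr /andP [Hpr Htr]]] Hqt.
  rewrite in_fsetU; have [Hpt|Hpt] := boolP (p \in t).
    by rewrite mem_simplices_avoiding HK Ht HtA Hpt Hqt.
  apply/orP; right; apply/imfsetP; exists (p |` t); last by rewrite /= fsetU1K.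
  rewrite mem_simplices_avoiding !in_fset1U eqxx negb_or Hqt eq_sym Hpq HK.
  rewrite fsubUset fsub1set HpA HtA !andbT.
  by apply: (Hcl Hr); rewrite ?fset1U_neq0 // fsubUset fsub1set Hpr.
apply: leq_trans (fsubset_leq_card Hsplit) _.
rewrite mul2n -addnn (leq_trans (leq_card_fsetU _ _)) // leq_add2l.
exact: leq_imfset_card.
Qed.

Variables u v : nat.
Hypotheses (Huv : u != v) (Hu : is_vertex u K) (Hv : is_vertex v K).

Let K' : complex := [fset [fset contr_map u v w | w in (t : simplex)] | t in K].
Let Kh' : complex := Kh `|` [fset v |` (t : simplex) | t in act_star u Kh A].

Lemma card_coned_new : #|` act_star u Kh A| <= #|` act_star v Kh A| ->
  #|` Kh' `\` Kh| <= minn #|` star_avoiding Kh A u v| #|` star_avoiding Kh A v u|.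
Proof.
move=> Hcard; set Au := act_star u Kh A; set Av := act_star v Kh A.
have Hnew : Kh' `\` Kh `<=` [fset v |` t | t in Au `\` Av].
  apply/fsubsetP => s; rewrite in_fsetD in_fsetU => /andP [Hn /orP [Hs|]].
    by rewrite Hs in Hn.
  case/imfsetP => t /= Ht Es; apply/imfsetP; exists t => //=.
  rewrite in_fsetD Ht andbT; apply: contra Hn => /act_starP [_ _ [r Hr /andP [Hvr Htr]]].
  by rewrite Es (Hcl Hr) ?fset1U_neq0 // fsubUset fsub1set Hvr.
apply: leq_trans (fsubset_leq_card Hnew) _; apply: leq_trans (leq_imfset_card _ _ _) _.
have Hswap : #|` Au `\` Av| <= #|` Av `\` Au| by rewrite !cardfsD fsetIC leq_sub2r.
rewrite leq_min (fsubset_leq_card (act_star_diff_sub _ _ _ _)) /=.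
exact: leq_trans Hswap (fsubset_leq_card (act_star_diff_sub _ _ _ _)).
Qed.

Lemma active_part_contr : active_part K' Kh' (A `\ u).
Proof.
have HuA := vertex_active Hu; have HvA := vertex_active Hv.
move=> t'; apply/idP/idP.
- case/imfsetP => t /= Ht ->; move: (Ht); rewrite HK => /andP [HtKh HtA].
  apply/andP; split; last first.
    apply/fsubsetP => _ /imfsetP [w /= Hw ->]; rewrite in_fsetD1 contr_map_neq //=.
    by rewrite /contr_map; case: ifP => // _; apply: (fsubsetP HtA).
  rewrite in_fsetU; have [Hut|Hut] := boolP (u \in t); last first.
    by rewrite imfset_contr_map_id ?HtKh.
  rewrite -(fsetD1K Hut) imfset_contr_map_U1 ?fsetD11 //.
  have [->|Hne] := eqVneq (t `\ u) fset0; first by rewrite fsetU0 vertex_fset1.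
  apply/orP; right; apply/imfsetP; exists (t `\ u) => //=; apply/act_starP; split.
  + by apply: (Hcl HtKh) => //; apply: fsubsetDl.
  + exact: fsubset_trans (fsubsetDl _ _) HtA.
  + by exists t => //; rewrite Hut fsubsetDl.
- case/andP; rewrite in_fsetU => /orP [Ht' Hsub|].
    have Hu' : u \notin t' by apply/negP => /(fsubsetP Hsub); rewrite fsetD11.
    apply/imfsetP; exists t' => /=; last by rewrite imfset_contr_map_id.
    by rewrite HK Ht' (fsubset_trans Hsub (fsubsetDl _ _)).
  case/imfsetP => tau /= /act_starP [Htau HtauA [r Hr /andP [Hur Htaur]]] -> Hsub.
  have Hu' : u \notin tau.
    by apply: contraTN Hsub => Hut; apply/fsubsetPn; exists u; rewrite ?fsetD11 ?fset1Ur.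
  apply/imfsetP; exists (u |` tau) => /=; last by rewrite imfset_contr_map_U1.
  rewrite HK fsubUset fsub1set HuA HtauA !andbT.
  by apply: (Hcl Hr); rewrite ?fset1U_neq0 // fsubUset fsub1set Hur.
Qed.

Lemma face_closed_contr : face_closed Kh'.
Proof.
move=> t t'; rewrite !in_fsetU => /orP [Ht|]; first by move=> *; rewrite (Hcl Ht).
case/imfsetP => tau /= /act_starP [Htau HtauA [r Hr /andP [Hur Htaur]]] -> Ht't Hne.
have [Hvtau|Hvtau] := boolP (v \in tau).
  by rewrite (Hcl Htau) //; rewrite mem_fset1U in Ht't.
have [Hvt'|Hvt'] := boolP (v \in t'); last first.
  rewrite (Hcl Htau) //; apply/fsubsetP => w Hw.
  move: (fsubsetP Ht't w Hw); rewrite in_fset1U => /orP [/eqP Ew|//].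
  by rewrite -Ew Hw in Hvt'.
have [E0|Hne'] := eqVneq (t' `\ v) fset0.
  by rewrite -(fsetD1K Hvt') E0 fsetU0 vertex_fset1.
have Hsub' : t' `\ v `<=` tau.
  apply/fsubsetP => w; rewrite in_fsetD1 => /andP [Hwv Hw].
  by move: (fsubsetP Ht't w Hw); rewrite in_fset1U (negbTE Hwv).
apply/orP; right; apply/imfsetP; exists (t' `\ v); last by rewrite /= fsetD1K.
apply/act_starP; split; first exact: Hcl Htau Hsub' Hne'.
  exact: fsubset_trans HtauA.
by exists r => //; rewrite Hur (fsubset_trans Hsub' Htaur).
Qed.

End ActivePart.

Lemma coning_inv_init : coning_inv init_state.
Proof. by split => [t|t t']; rewrite /= ?in_fset0. Qed.

Lemma coning_inv_incl st sg : coning_inv st ->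
  (forall t, t `<` sg -> t != fset0 -> t \in cK st) ->
  (#|` sg| = 1 -> forall t w, t \in cKh st -> w \in sg -> w \notin t) ->
  coning_inv (next_state st (Incl sg)).
Proof.
case: st => K Kh A [/= HK Hcl] Hfaces Hfresh; split => /=.
- have HsgA : sg `<=` (if #|` sg| == 1 then A `|` sg else A).
    case: ifP => [_|/negbT Hn1]; first exact: fsubsetUr.
    apply/fsubsetP => w Hw; apply: (vertex_active HK); apply/is_vertexP.
    exists [fset w]; rewrite ?in_fset1 //.
    by apply: Hfaces; rewrite ?fproper_fset1 ?fset1_neq0.
  move=> t; rewrite !in_fset1U; have [-> /=|_ /=] := eqVneq t sg; first by rewrite HsgA.
  rewrite HK; case Ht: (t \in Kh) => //=; case: ifP => // /eqP Hsg1.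
  apply/idP/idP => [HtA|/fsubsetP HtA]; first exact: fsubset_trans HtA (fsubsetUl _ _).
  apply/fsubsetP => w Hw; move: (HtA w Hw); rewrite in_fsetU => /orP [//|Hwsg].
  by move: (Hfresh Hsg1 t w Ht Hwsg); rewrite Hw.
- move=> t t'; rewrite !in_fset1U => /orP [/eqP -> Ht'sg Hne|Ht Ht't Hne].
    have [//|Hneq] := eqVneq t' sg.
    by move: (Hfaces t'); rewrite fproperEneq Hneq Ht'sg HK => /(_ isT Hne) /andP [->].
  by rewrite (Hcl t) ?orbT.
Qed.

Section Tower.

Variable T : seq step.
Hypothesis HT : valid_tower T.

Lemma state_succ j : j < size T -> state T j.+1 = next_state (state T j) (stepn T j).
Proof. by move=> Hj; rewrite /state (take_nth (Incl fset0) Hj) -cats1 foldl_cat. Qed.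

Lemma Kc_succ_incl j sg : j < size T -> stepn T j = Incl sg -> Kc T j.+1 = sg |` Kc T j.
Proof. by move=> Hj Est; rewrite /Kc state_succ // Est. Qed.

Lemma Kc_succ_contr j a b u v : j < size T -> stepn T j = Contr a b ->
  ord_pair (state T j) a b = (u, v) ->
  Kc T j.+1 = [fset [fset contr_map u v w | w in (t : simplex)] | t in Kc T j].
Proof. by move=> Hj Est Euv; rewrite /Kc state_succ // Est /= Euv. Qed.

Lemma contr_step_valid j a b u v : j < size T -> stepn T j = Contr a b ->
  ord_pair (state T j) a b = (u, v) ->
  [/\ (u, v) = (a, b) \/ (u, v) = (b, a), u != v,
      is_vertex u (Kc T j) & is_vertex v (Kc T j)].
Proof.
move=> Hj Est; have := HT Hj; rewrite Est => -[Hab Ha Hb].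
case: (ord_pairE (state T j) a b) => -> [<- <-]; first by split; auto.
by split; rewrite 1?eq_sym; auto.
Qed.

Lemma incl_mem j sg : j < size T -> stepn T j = Incl sg -> sg \in Kc T j.+1.
Proof. by move=> Hj Est; rewrite (Kc_succ_incl Hj Est) fset1U1. Qed.

Lemma incl_face_vertex j sg w : j < size T -> stepn T j = Incl sg ->
  w \in sg -> #|` sg| != 1 -> is_vertex w (Kc T j).
Proof.
move=> Hj Est Hw Hsg; have := HT Hj; rewrite Est => -[_ _ Hfaces _].
by apply/is_vertexP; exists [fset w]; rewrite ?in_fset1 // Hfaces ?fproper_fset1 ?fset1_neq0.
Qed.

Lemma incl_fresh j x : j < size T -> stepn T j = Incl [fset x] ->
  forall j', j' <= j -> ~~ is_vertex x (Kc T j').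
Proof.
by move=> Hj Est; have := HT Hj; rewrite Est => -[_ _ _]; apply; rewrite ?cardfs1 ?in_fset1.
Qed.

Lemma is_vertex_incl_succ j sg w : j < size T -> stepn T j = Incl sg ->
  is_vertex w (Kc T j.+1) -> is_vertex w (Kc T j) \/ sg = [fset w].
Proof.
move=> Hj Est; rewrite (Kc_succ_incl Hj Est) => /is_vertexP [s].
rewrite in_fset1U => /orP [/eqP -> Hw|Hs Hw]; last by left; apply/is_vertexP; exists s.
have [/eqP/cardfs1P [x Ex]|Hn1] := eqVneq #|` sg| 1.
  by move: Hw; rewrite Ex in_fset1 => /eqP ->; right.
by left; apply: incl_face_vertex Est Hw Hn1.
Qed.

Lemma is_vertex_contr_succ j a b u v w : j < size T -> stepn T j = Contr a b ->
  ord_pair (state T j) a b = (u, v) -> is_vertex w (Kc T j.+1) ->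
  is_vertex w (Kc T j) /\ w != u.
Proof.
move=> Hj Est Euv; have [_ Huv _ Hv] := contr_step_valid Hj Est Euv.
rewrite (Kc_succ_contr Hj Est Euv) => /is_vertexP [_ /imfsetP [t /= Ht ->]].
case/imfsetP => w0 /= Hw0 ->.
split; last exact: contr_map_neq.
by rewrite /contr_map; case: ifP => // _; apply/is_vertexP; exists t.
Qed.

Lemma is_vertex_pred j j' w : j < size T -> j' <= j ->
  is_vertex w (Kc T j') -> is_vertex w (Kc T j.+1) -> is_vertex w (Kc T j).
Proof.
move=> Hj Hj'j Hw' Hw; case Est: (stepn T j) => [sg|a b].
  case: (is_vertex_incl_succ Hj Est Hw) => // Esg; rewrite Esg in Est.
  by move: (incl_fresh Hj Est Hj'j); rewrite Hw'.
by case Euv: (ord_pair (state T j) a b) => [u v]; case: (is_vertex_contr_succ Hj Est Euv Hw).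
Qed.

Lemma Kc_persist i j t : i <= j -> j <= size T -> t \in Kc T i ->
  (forall w, w \in t -> is_vertex w (Kc T j)) -> t \in Kc T j.
Proof.
move=> Hij Hj Ht; elim: j Hij Hj => [|j IH]; first by rewrite leqn0 => /eqP <-.
rewrite leq_eqVlt ltnS => /predU1P [<- //|Hij] Hj Hv.
have Htj : t \in Kc T j.
  apply: IH (ltnW Hj) _ => // w Hw; apply: (is_vertex_pred Hj Hij) (Hv w Hw).
  by apply/is_vertexP; exists t.
case Est: (stepn T j) => [sg|a b]; first by rewrite (Kc_succ_incl Hj Est) in_fset1U Htj orbT.
case Euv: (ord_pair (state T j) a b) => [u v].
rewrite (Kc_succ_contr Hj Est Euv); apply/imfsetP; exists t => //=.
rewrite imfset_contr_map_id //; apply/negP => /Hv Hu.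
by have [_] := is_vertex_contr_succ Hj Est Euv Hu; rewrite eqxx.
Qed.

Lemma incl_inj i i' sg : i < size T -> i' < size T ->
  stepn T i = Incl sg -> stepn T i' = Incl sg -> i = i'.
Proof.
wlog Hlt : i i' / i < i'.
  move=> Hwlog Hi Hi' Est Est'; case: (ltngtP i i') => // Hlt; first exact: Hwlog.
  by apply/esym; apply: Hwlog.
move=> Hi Hi' Est Est'; exfalso; have := HT Hi'; rewrite Est' => -[_ /negP Hnew _ _].
have [/eqP/cardfs1P [x Ex]|Hn1] := eqVneq #|` sg| 1.
  rewrite Ex in Est Est'; move/negP: (incl_fresh Hi' Est' Hlt); apply.
  by apply/is_vertexP; exists [fset x]; rewrite ?in_fset1 ?(incl_mem Hi Est).
apply: Hnew (Kc_persist Hlt (ltnW Hi') (incl_mem Hi Est) _) => w Hw.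
exact: incl_face_vertex Est' Hw Hn1.
Qed.

Lemma Khat_vertex_old j t w : j <= size T -> t \in Khat T j -> w \in t ->
  exists2 j', j' <= j & is_vertex w (Kc T j').
Proof.
elim: j t w => [|j IH] t w Hj; first by rewrite /Khat /state take0 in_fset0.
have old t' : t' \in Khat T j -> w \in t' -> exists2 j', j' <= j.+1 & is_vertex w (Kc T j').
  by move=> Ht' Hw; have [j' Hj' Hv] := IH t' w (ltnW Hj) Ht' Hw; exists j' => //; apply: leqW.
rewrite /Khat state_succ //; case Est: (stepn T j) => [sg|a b] /=.
  rewrite in_fset1U => /orP [/eqP -> Hw|]; last exact: old.
  by exists j.+1 => //; apply/is_vertexP; exists sg; rewrite ?(incl_mem Hj Est).
case Euv: (ord_pair (state T j) a b) => [u v] /=.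
rewrite in_fsetU => /orP [|/imfsetP [tau /act_starP [Htau _ _] ->]]; first exact: old.
rewrite in_fset1U => /orP [/eqP ->|]; last exact: old.
by have [_ _ _ Hv] := contr_step_valid Hj Est Euv; exists j.
Qed.

Lemma coning_inv_state j : j <= size T -> coning_inv (state T j).
Proof.
elim: j => [|j IH] Hj; first by rewrite /state take0; apply: coning_inv_init.
have [HK Hcl] := IH (ltnW Hj); rewrite state_succ //.
case Est: (stepn T j) => [sg|a b].
  have := HT Hj; rewrite Est => -[_ _ Hfaces _].
  apply: coning_inv_incl => // /eqP/cardfs1P [x Ex] t w Ht; rewrite Ex in Est *.
  rewrite in_fset1 => /eqP ->; apply/negP => Hx.
  have [j' Hj' Hv] := Khat_vertex_old (ltnW Hj) Ht Hx.
  by move: (incl_fresh Hj Est Hj'); rewrite Hv.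
case Euv: (ord_pair (state T j) a b) => [u v].
have [_ Huv Hu Hv] := contr_step_valid Hj Est Euv.
rewrite /next_state Euv /=; split.
- exact: active_part_contr.
- exact: face_closed_contr.
Qed.

Definition step_map j (w : nat) : nat :=
  if stepn T j is Contr a b then
    contr_map (ord_pair (state T j) a b).1 (ord_pair (state T j) a b).2 w
  else w.

Lemma step_map_incl j sg w : stepn T j = Incl sg -> step_map j w = w.
Proof. by rewrite /step_map => ->. Qed.

Lemma step_map_contr j a b u v w : stepn T j = Contr a b ->
  ord_pair (state T j) a b = (u, v) -> step_map j w = contr_map u v w.
Proof. by rewrite /step_map => -> ->. Qed.

Lemma is_vertex_step_map j w : j < size T ->
  is_vertex w (Kc T j) -> is_vertex (step_map j w) (Kc T j.+1).
Proof.
move=> Hj /is_vertexP [s Hs Hw]; case Est: (stepn T j) => [sg|a b].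
  rewrite (step_map_incl _ Est) (Kc_succ_incl Hj Est).
  by apply/is_vertexP; exists s; rewrite ?in_fset1U ?Hs ?orbT.
case Euv: (ord_pair (state T j) a b) => [u v].
rewrite (step_map_contr _ Est Euv) (Kc_succ_contr Hj Est Euv); apply/is_vertexP.
by exists [fset contr_map u v w0 | w0 in s]; apply/imfsetP; [exists s|exists w].
Qed.

Lemma step_map_unproduced j w : j < size T -> ~~ produces T j w ->
  is_vertex w (Kc T j.+1) -> is_vertex w (Kc T j) /\ step_map j w = w.
Proof.
move=> Hj; rewrite /produces; case Est: (stepn T j) => [sg|a b] Hp Hw.
  rewrite (step_map_incl _ Est); split => //.
  by case: (is_vertex_incl_succ Hj Est Hw) => // Esg; rewrite Esg eqxx in Hp.
case Euv: (ord_pair (state T j) a b) Hp => [u v] /= Hp.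
have [Hwj Hwu] := is_vertex_contr_succ Hj Est Euv Hw.
by rewrite (step_map_contr _ Est Euv) contr_map_id.
Qed.

Fixpoint tower_map (i j w : nat) {struct j} : nat :=
  if j is j'.+1 then (if i <= j' then step_map j' (tower_map i j' w) else w) else w.

Lemma tower_map_id i j w : j <= i -> tower_map i j w = w.
Proof. by elim: j => //= j IH Hji; rewrite leqNgt Hji. Qed.

Lemma tower_map_succ i j w : i <= j -> tower_map i j.+1 w = step_map j (tower_map i j w).
Proof. by move=> /= ->. Qed.

Lemma tower_map_comp i j k w : i <= j -> j <= k ->
  tower_map j k (tower_map i j w) = tower_map i k w.
Proof.
move=> Hij; elim: k => [|k IH].
  by move=> Hj0; rewrite /= tower_map_id // (leq_trans Hj0).
rewrite leq_eqVlt ltnS => /predU1P [<-|Hjk]; first by rewrite tower_map_id.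
by rewrite !tower_map_succ ?IH // (leq_trans Hij).
Qed.

Lemma is_vertex_tower_map i j w : i <= j -> j <= size T ->
  is_vertex w (Kc T i) -> is_vertex (tower_map i j w) (Kc T j).
Proof.
move=> Hij Hj Hw; elim: j Hij Hj => [|j IH].
  by rewrite leqn0 => /eqP Ei; rewrite Ei in Hw.
rewrite leq_eqVlt ltnS => /predU1P [<-|Hij] Hj; first by rewrite tower_map_id.
by rewrite tower_map_succ //; apply: is_vertex_step_map => //; apply: IH => //; apply: ltnW.
Qed.

Lemma Kc_preimage j s : j <= size T -> s \in Kc T j ->
  exists i sg, [/\ i < j, stepn T i = Incl sg & s = [fset tower_map i.+1 j w | w in sg]].
Proof.
elim: j s => [|j IH] s Hj; first by rewrite /Kc /state take0 in_fset0.
case Est: (stepn T j) => [sg|a b].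
  rewrite (Kc_succ_incl Hj Est) in_fset1U => /orP [/eqP ->|Hs].
    exists j, sg; split => //; rewrite -[LHS]imfset_id.
    by apply: eq_imfset => // w; rewrite tower_map_id.
  have [i [sg' [Hij Ei ->]]] := IH s (ltnW Hj) Hs.
  exists i, sg'; split; rewrite ?ltnS ?(ltnW Hij) //.
  by apply: eq_imfset => // w; rewrite tower_map_succ // (step_map_incl _ Est).
case Euv: (ord_pair (state T j) a b) => [u v].
rewrite (Kc_succ_contr Hj Est Euv) => /imfsetP [t /= Ht ->].
have [i [sg' [Hij Ei ->]]] := IH t (ltnW Hj) Ht.
exists i, sg'; split; rewrite ?ltnS ?(ltnW Hij) // -imfset_comp.
by apply: eq_imfset => // w /=; rewrite Hij (step_map_contr _ Est Euv).
Qed.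

Lemma produces_inj j w w' : produces T j w -> produces T j w' -> w = w'.
Proof.
rewrite /produces; case: (stepn T j) => [sg|a b] /eqP -> /eqP //.
by move/fsetP/(_ w); rewrite !in_fset1 eqxx => /esym/eqP.
Qed.

Lemma node_of_succ w j :
  node_of T w j.+1 = if produces T j w then Some j else node_of T w j.
Proof.
rewrite /node_of -addn1 iotaD add0n filter_cat map_cat /=.
by case: ifP => _; rewrite ?cats0 // last_cat.
Qed.

Lemma node_of_Some w j n : node_of T w j = Some n -> n < j /\ produces T n w.
Proof.
elim: j n => [|j IH] n //; rewrite node_of_succ; case: ifP => [Hp [<-]|_ /IH [Hn Hp]] //.
by split => //; apply: ltnW.
Qed.

Lemma in_sub_mono f g z y : f <= g -> in_sub T f z y -> in_sub T g z y.
Proof.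
elim: f g y => [|f IH] [|g] y //= Hfg; first by case/orP => [->|].
case/orP => [->//|/hasP [c Hc Hin]]; apply/orP; right.
by apply/hasP; exists c => //; apply: IH.
Qed.

Lemma in_subtree_refl n : in_subtree T n n.
Proof. by rewrite /in_subtree /= eqxx. Qed.

Lemma mem_childrenP x c : c \in children T x ->
  exists a b, stepn T x = Contr a b /\ (node_of T a x = Some c \/ node_of T b x = Some c).
Proof.
rewrite /children; case: (stepn T x) => // a b Hc; exists a, b; split => //; move: Hc.
case: (node_of T a x) => [na|]; case: (node_of T b x) => [nb|] //=; rewrite !inE.
- by case/orP => /eqP ->; auto.
- by move/eqP => ->; auto.
- by move/eqP => ->; auto.
Qed.

Lemma mem_children x a b w c : stepn T x = Contr a b -> w = a \/ w = b ->
  node_of T w x = Some c -> c \in children T x.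
Proof.
rewrite /children => -> [] -> ->.
  by case: (node_of T b x) => [nb|]; rewrite /= !inE eqxx.
by case: (node_of T a x) => [na|]; rewrite /= !inE eqxx ?orbT.
Qed.

Lemma children_lt x c : c \in children T x -> c < x.
Proof.
by case/mem_childrenP => a [b [_ [] /node_of_Some []]].
Qed.

Lemma in_subtree_child x c z : c \in children T x ->
  in_subtree T z c -> in_subtree T z x.
Proof.
move=> Hc Hz; rewrite /in_subtree /=; apply/orP; right; apply/hasP; exists c => //.
exact: in_sub_mono (children_lt Hc) Hz.
Qed.

Lemma node_of_vertex j w : j <= size T -> is_vertex w (Kc T j) ->
  exists n l, [/\ node_of T w j = Some n, produces T n l & tower_map n.+1 j l = w].
Proof.
elim: j w => [|j IH] w Hj Hw.
  by case/is_vertexP: Hw => s; rewrite /Kc /state take0 in_fset0.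
rewrite node_of_succ; case: ifP => Hp; first by exists j, w; rewrite tower_map_id.
have [Hwj Hfix] := step_map_unproduced Hj (negbT Hp) Hw.
have [n [l [En Hl Hnl]]] := IH w (ltnW Hj) Hwj.
exists n, l; split => //; have [Hnj _] := node_of_Some En.
by rewrite tower_map_succ // Hnl Hfix.
Qed.

Lemma node_of_step_map j w m : j < size T -> is_vertex w (Kc T j) ->
  node_of T w j = Some m ->
  node_of T (step_map j w) j.+1 = Some m \/
  node_of T (step_map j w) j.+1 = Some j /\ m \in children T j.
Proof.
move=> Hj Hw Hm; rewrite node_of_succ /produces; case Est: (stepn T j) => [sg|a b].
  rewrite (step_map_incl _ Est); case: eqP => [Esg|_]; last by left.
  by rewrite Esg in Est; move: (incl_fresh Hj Est (leqnn j)); rewrite Hw.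
case Euv: (ord_pair (state T j) a b) => [u v] /=; rewrite (step_map_contr _ Est Euv).
have [Hab _ _ _] := contr_step_valid Hj Est Euv.
have [Hwuv|Hwuv] := boolP ((w == u) || (w == v)).
  rewrite contr_map_U // eqxx; right; split => //; apply: (mem_children Est _ Hm).
  by case: Hab => -[<- <-]; case/orP: Hwuv => /eqP ->; auto.
have Hwu : w != u by apply: contraNneq Hwuv => ->; rewrite eqxx.
rewrite contr_map_id //; left; case: eqP => // Evw.
by rewrite Evw eqxx orbT in Hwuv.
Qed.

Lemma node_of_tower_map i j w n : i <= j -> j <= size T -> is_vertex w (Kc T i) ->
  node_of T w i = Some n ->
  exists2 m, node_of T (tower_map i j w) j = Some m & in_subtree T n m.
Proof.
move=> Hij Hj Hw Hn; elim: j Hij Hj => [|j IH].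
  by rewrite leqn0 => /eqP Ei; rewrite Ei in Hn.
rewrite leq_eqVlt ltnS => /predU1P [<-|Hij] Hj.
  by rewrite tower_map_id //; exists n => //; apply: in_subtree_refl.
have [m Hm Hnm] := IH Hij (ltnW Hj); rewrite tower_map_succ //.
have Hwj := is_vertex_tower_map Hij (ltnW Hj) Hw.
case: (node_of_step_map Hj Hwj Hm) => [Hm'|[Hj' Hmj]]; first by exists m.
by exists j => //; apply: in_subtree_child Hmj Hnm.
Qed.

Lemma tower_map_child_label y c lc ly : y < size T -> c \in children T y ->
  produces T c lc -> produces T y ly -> tower_map c.+1 y.+1 lc = ly.
Proof.
move=> Hy Hc Hlc Hly; have [a [b [Est Hab]]] := mem_childrenP Hc.
case Euv: (ord_pair (state T y) a b) Hly => [u v]; rewrite /produces Est Euv => /eqP <-.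
have [Huv _ Hu Hv] := contr_step_valid Hy Est Euv.
have [a' [Ea' Ha'uv]] : exists a', node_of T a' y = Some c /\ (a' == u) || (a' == v).
  case: Hab => Hn; [exists a|exists b]; split => //;
    by case: Huv => -[-> ->]; rewrite eqxx ?orbT.
have Ha' : is_vertex a' (Kc T y) by case/orP: Ha'uv => /eqP ->.
have [n [l [En Hl Hla']]] := node_of_vertex (ltnW Hy) Ha'.
move: En; rewrite Ea' => -[En]; subst n; rewrite (produces_inj Hlc Hl).
have [Hcy _] := node_of_Some Ea'.
by rewrite tower_map_succ // Hla' (step_map_contr _ Est Euv) contr_map_U.
Qed.

Lemma tower_map_subtree_label x f z y lz ly : x <= size T ->
  in_sub T f z y -> y < x -> produces T z lz -> produces T y ly ->
  tower_map z.+1 x lz = tower_map y.+1 x ly.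
Proof.
move=> Hx; elim: f y ly => [|f IH] y ly /=.
  by rewrite orbF => /eqP -> _ Hz Hy; rewrite (produces_inj Hz Hy).
case/orP => [/eqP -> _ Hz Hy|/hasP [c Hc Hsub] Hyx Hz Hy].
  by rewrite (produces_inj Hz Hy).
have Hcy := children_lt Hc.
have [lc Hlc] : exists lc, produces T c lc.
  by have [a [b [_ [] /node_of_Some [_ Hp]]]] := mem_childrenP Hc; eexists; exact: Hp.
rewrite (IH c lc Hsub (ltn_trans Hcy Hyx) Hz Hlc).
rewrite -(@tower_map_comp c.+1 y.+1 x) ?ltnS ?(ltnW Hcy) //.
by rewrite (tower_map_child_label (leq_trans Hyx Hx) Hc Hlc Hy).
Qed.

Lemma mem_EP y sg : reflect
  (exists i, [/\ i < size T, stepn T i = Incl sg &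
     exists2 w, w \in sg & exists2 n, node_of T w i.+1 = Some n & in_subtree T n y])
  (sg \in E T y).
Proof.
rewrite /E in_fset /= mem_pmap; apply: (iffP mapP).
  case=> i; rewrite mem_iota add0n /= => Hi.
  case Est: (stepn T i) => [s|//]; case: ifP => // /existsP [w Hw] [Es]; subst s.
  exists i; split => //; exists (val w); first exact: fsvalP.
  by move: Hw; case: (node_of T (val w) i.+1) => // n Hn; exists n.
case=> i [Hi Est [w Hw [n Hn Hsub]]]; exists i; first by rewrite mem_iota add0n.
by rewrite Est; case: ifP => // /negbT /existsP []; exists [` Hw]; rewrite /= Hn.
Qed.

Lemma mem_E_of_image i x sg w n : i < x -> x <= size T -> stepn T i = Incl sg ->
  w \in sg -> node_of T (tower_map i.+1 x w) x = Some n -> sg \in E T n.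
Proof.
move=> Hix Hx Est Hw Hn; have Hi := leq_trans Hix Hx.
have Hwv : is_vertex w (Kc T i.+1) by apply/is_vertexP; exists sg; rewrite ?(incl_mem Hi Est).
have [n0 [_ [En0 _ _]]] := node_of_vertex Hi Hwv.
have [m Hm Hsub] := node_of_tower_map Hix Hx Hwv En0.
apply/mem_EP; exists i; split => //; exists w => //; exists n0 => //.
by move: Hm; rewrite Hn => -[->].
Qed.

Lemma image_of_mem_E i x sg q n : i < x -> x <= size T -> stepn T i = Incl sg ->
  is_vertex q (Kc T x) -> node_of T q x = Some n -> sg \in E T n ->
  q \in [fset tower_map i.+1 x w | w in sg].
Proof.
move=> Hix Hx Est Hq Hn /mem_EP [i' [Hi' Est' [w Hw [n' Hn' Hsub]]]].
have Hi := leq_trans Hix Hx; have Eii := incl_inj Hi Hi' Est Est'; subst i'.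
have Hwv : is_vertex w (Kc T i.+1) by apply/is_vertexP; exists sg; rewrite ?(incl_mem Hi Est).
have [n1 [l [En1 Hl Hlw]]] := node_of_vertex Hi Hwv.
move: En1; rewrite Hn' => -[En1]; subst n1.
have [n2 [lq [En2 Hlq Hlqq]]] := node_of_vertex Hx Hq.
move: En2; rewrite Hn => -[En2]; subst n2.
have [Hnx _] := node_of_Some Hn; have [Hn'i _] := node_of_Some Hn'.
apply/imfsetP; exists w => //=.
by rewrite -Hlqq -(tower_map_subtree_label Hx Hsub Hnx Hl Hlq) -Hlw tower_map_comp.
Qed.

Definition includes (sg : simplex) (s : step) : bool :=
  if s is Incl s' then s' == sg else false.

Lemma find_includes i sg : i < size T -> stepn T i = Incl sg -> find (includes sg) T = i.
Proof.
move=> Hi Est; have Hsg : includes sg (nth (Incl fset0) T i) by rewrite -/(stepn T i) Est /=.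
have Hle : find (includes sg) T <= i.
  by rewrite leqNgt; apply/negP => /(before_find (Incl fset0)); rewrite Hsg.
have Hk : find (includes sg) T < size T := leq_ltn_trans Hle Hi.
have := nth_find (Incl fset0) (etrans (has_find _ _) Hk); rewrite -/(stepn T _).
by case Est': (stepn T _) => [s|] //= /eqP Es; subst s; apply: incl_inj Est' Est.
Qed.

Definition included_image x (sg : simplex) : simplex :=
  [fset tower_map (find (includes sg) T).+1 x w | w in sg].

Lemma card_simplices_avoiding_le x p q np nq : x <= size T -> is_vertex q (Kc T x) ->
  node_of T p x = Some np -> node_of T q x = Some nq ->
  #|` simplices_avoiding (Kc T x) p q| <= #|` E T np `\` E T nq|.
Proof.
move=> Hx Hq Hnp Hnq.
suff Hsub : simplices_avoiding (Kc T x) p q `<=` included_image x @` (E T np `\` E T nq).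
  exact: leq_trans (fsubset_leq_card Hsub) (leq_imfset_card _ _ _).
apply/fsubsetP => s; rewrite mem_simplices_avoiding => /and3P [Hs Hps Hqs].
have [i [sg [Hix Est Es]]] := Kc_preimage Hx Hs.
have Hi := leq_trans Hix Hx.
apply/imfsetP; exists sg; last by rewrite /included_image (find_includes Hi Est).
rewrite in_fsetD; apply/andP; split.
  by apply: contra Hqs => HE; rewrite Es (image_of_mem_E Hix Hx Est Hq Hnq HE).
move: Hps; rewrite Es => /imfsetP [w /= Hw Ep]; rewrite Ep in Hnp.
exact: mem_E_of_image Hix Hx Est Hw Hnp.
Qed.

Lemma cost_le_star_avoiding x a b p q : x < size T -> stepn T x = Contr a b ->
  (p, q) = (a, b) \/ (p, q) = (b, a) ->
  cost T x <= #|` star_avoiding (Khat T x) (cAct (state T x)) p q|.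
Proof.
move=> Hx Est Hpq; have [_ Hcl] := coning_inv_state (ltnW Hx).
case Euv: (ord_pair (state T x) a b) => [u v].
have [Huv _ _ _] := contr_step_valid Hx Est Euv.
have := card_act_star_ord_pair (state T x) a b; rewrite Euv /= => Hcard.
rewrite /cost /Khat state_succ // Est /next_state Euv /=.
apply: leq_trans (card_coned_new Hcl Hcard) _.
by case: Huv Hpq => -[-> ->] [] [-> ->]; rewrite ?geq_minl ?geq_minr.
Qed.

Lemma children_contr x a b y1 y2 : stepn T x = Contr a b ->
  y1 \in children T x -> y2 \in children T x -> y1 != y2 ->
  exists p q, [/\ (p, q) = (a, b) \/ (p, q) = (b, a),
                  node_of T p x = Some y1 & node_of T q x = Some y2].
Proof.
rewrite /children => ->.
case Ha: (node_of T a x) => [na|]; case Hb: (node_of T b x) => [nb|] //=; rewrite !inE.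
- case/orP => /eqP -> /orP [] /eqP ->; rewrite ?eqxx // => _.
  + by exists a, b; split; auto.
  + by exists b, a; split; auto.
- by move=> /eqP -> /eqP ->; rewrite eqxx.
- by move=> /eqP -> /eqP ->; rewrite eqxx.
Qed.

End Tower.

Theorem lemma8 (T : seq step) (HT : valid_tower T) (x y1 y2 : nat)
  (Hx : is_internal T x) (Hy1 : y1 \in children T x)
  (Hy2 : y2 \in children T x) (Hy12 : y1 != y2) :
  cost T x <= 2 * #|` (E T y1 `\` E T y2)%fset|.
Proof.
have [Hxs [a [b Ex]]] : x < size T /\ exists a b, stepn T x = Contr a b.
  move: Hx; rewrite /is_internal; case: (stepn T x) => [sg|a b]; rewrite ?andbF ?andbT //.
  by move=> ->; eauto.
have [p [q [Hpq Hy1p Hy2q]]] := children_contr Ex Hy1 Hy2 Hy12.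
have [Hneq Hp Hq] : [/\ p != q, is_vertex p (Kc T x) & is_vertex q (Kc T x)].
  have := HT x Hxs; rewrite Ex => -[Hab Ha Hb].
  by case: Hpq => -[-> ->]; split => //; rewrite eq_sym.
have [HK Hcl] := coning_inv_state HT (ltnW Hxs).
apply: leq_trans (cost_le_star_avoiding HT Hxs Ex Hpq) _.
apply: leq_trans (card_star_avoiding HK Hcl (vertex_active HK Hp) Hneq) _.
by rewrite leq_mul2l (card_simplices_avoiding_le HT (ltnW Hxs) Hq Hy1p Hy2q) orbT.
Qed.
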